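(* For every pointed topological space $(X,x_0)$ (regarded as a pointed epitopological and pseudotopological space), $R_2\,\pi_1^{\mathrm{epi}}(X,x_0)=\pi_1^{\mathrm{qtop}}(X,x_0)$ and $R\,\pi_1^{\mathrm{ps}}(X,x_0)=\pi_1^{\mathrm{qtop}}(X,x_0)$; that is, the underlying groups are all the fundamental group $\pi_1(X,x_0)$ and the topologies obtained by reflecting the epitopological and pseudotopological structures are the quotient topology of $\pi_1^{\mathrm{qtop}}(X,x_0)$.
   Context: For a set $X$, $U(X)$ is the set of ultrafilters on $X$, $\dot x$ the principal ultrafilter at $x$; $f_*\mathscr F=\{S:f^{-1}(S)\in\mathscr F\}$. A pseudotopological space is a set $X$ with $u\subset U(X)\times X$ containing all $(\dot x,x)$; write $\mathscr U\to x$; for a filter, $\mathscr F\to x$ means every finer ultrafilter converges to $x$. Continuous maps: $\mathscr U\to x\Rightarrow f_*\mathscr U\to f(x)$. Subspaces and products carry initial structures; the final structure for $q\colon X\to Z$: $\mathscr U\to z$ iff $\mathscr U=\dot z$ or $\mathscr U=q_*\mathscr V$, $z=q(x)$ with $\mathscr V\to x$. Topological spaces are regarded as pseudotopological via ultrafilter convergence. For pseudotopological $X,Y$, $Y^X$ is the set of continuous maps with: a filter $\mathscr F\to f$ iff for every filter $\mathscr G\to x$, $\mathrm{ev}_*(\mathscr F\times\mathscr G)\to f(x)$. A pseudotopological space is epitopological if its structure is initial w.r.t. some family of maps $X\to Z_j^{Y_j}$, $Y_j,Z_j$ topological; these form the cartesian closed category $\mathsf{EpiTop}$. For a pseudotopological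 space $A$, $RA$ is the topological space on $|A|$ in which $S$ is open iff $S\in\mathscr U$ whenever $\mathscr U\to a\in S$; $R_2$ denotes $R$ applied to epitopological spaces. $\Omega^{\mathrm{ps}}(X,x_0)$: loops $l\colon[0,1]\to X$ at $x_0$ with the subspace structure of $X^{[0,1]}$; $\Omega^{\mathrm{epi}}$: same using the exponential and subspaces of $\mathsf{EpiTop}$; $\Omega^{\mathrm{top}}(X,x_0)$: based loops with the subspace topology of the compact-open topology. $\pi_0^{\mathrm{ps}}A$: path components with the final pseudotopology w.r.t. the projection; $\pi_0^{\mathrm{epi}}A$: path components with the smallest epitopological structure making the projection continuous; $\pi_0^{\mathrm{top}}A$: path components with the quotient topology. $\pi_1^{\mathrm{ps}}=\pi_0^{\mathrm{ps}}\Omega^{\mathrm{ps}}$, $\pi_1^{\mathrm{epi}}=\pi_0^{\mathrm{epi}}\Omega^{\mathrm{epi}}$, and $\pi_1^{\mathrm{qtop}}(X,x_0)=\pi_0^{\mathrm{top}}\Omega^{\mathrm{top}}(X,x_0)$ (Biss's topologized fundamental group, a quasitopological group), each with group structure induced by loop concatenation. *)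

(* Topological spaces are mathcomp
   [topologicalType]s; the unit interval is the subspace [0,1] of the
   Stdlib reals (a realType via Rstruct), with the initial (= subspace)
   topology of [set_type]; the compact-open topology is mathcomp's
   {compact-open, _ -> _}. *)
From HB Require Import structures.
From mathcomp Require Import all_boot all_order all_algebra.
From mathcomp Require Import all_classical all_reals all_analysis.
From mathcomp Require Import Rstruct Rstruct_topology.
Import Order.TTheory GRing.Theory Num.Theory.

Set Implicit Arguments.
Unset Strict Implicit.
Unset Printing Implicit Defensive.

Local Open Scope classical_set_scope.
Local Open Scope ring_scope.

Notation I01 := (set_type ([set` `[0%R, 1%R]] : set Rdefinitions.R)).

Lemma zero_in01 : (0 : Rdefinitions.R) \in ([set` `[0%R, 1%R]] : set Rdefinitions.R).
Proof. by rewrite inE /= in_itv /= lexx ler01. Qed.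
Lemma one_in01 : (1 : Rdefinitions.R) \in ([set` `[0%R, 1%R]] : set Rdefinitions.R).
Proof. by rewrite inE /= in_itv /= lexx ler01. Qed.

Definition i0 : I01 := exist _ 0 zero_in01.
Definition i1 : I01 := exist _ 1 one_in01.

Definition is_filter {T} (F : set_system T) : Prop :=
  [/\ F setT, (forall A B, F A -> F B -> F (A `&` B))
    & (forall A B, A `<=` B -> F A -> F B)].

Definition is_ultra {T} (U : set_system T) : Prop :=
  [/\ is_filter U, ~ U set0 & (forall A, U A \/ U (~` A))].

Definition principal {T} (x : T) : set_system T := [set A | A x].

Definition pushf {S T} (f : S -> T) (F : set_system S) : set_system T :=
  [set B | F (f @^-1` B)].

Definition prodF {S T} (F : set_system S) (G : set_system T)
  : set_system (S * T) :=
  [set W | exists A B, [/\ F A, G B & A `*` B `<=` W]].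

(* ---------- convergence (pseudotopological) spaces ----------
   A space is a carrier with a relation between set systems and points;
   only its restriction to ultrafilters is ever used (all notions below
   quantify over ultrafilters), so this is a subset of U(X) x X. *)
Record psSpace := PsSpace {
  ps_car :> Type;
  ps_conv : set_system ps_car -> ps_car -> Prop }.

Definition fconv (A : psSpace) (F : set_system A) (a : A) : Prop :=
  forall U, is_ultra U -> F `<=` U -> ps_conv U a.

Definition ps_cont (A B : psSpace) (f : A -> B) : Prop :=
  forall (U : set_system A) (a : A), is_ultra U -> ps_conv U a ->
    ps_conv (pushf f U) (f a).

Definition ps_of_top (T : topologicalType) : psSpace :=
  @PsSpace T (fun U x => nbhs x `<=` U).

Definition cmap (A B : psSpace) := {f : A -> B | ps_cont f}.

Definition ev {A B : psSpace} (p : cmap A B * A) : B := sval p.1 p.2.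

Definition ps_exp (A B : psSpace) : psSpace :=
  @PsSpace (cmap A B) (fun F f =>
    forall (G : set_system A) (x : A), is_filter G -> fconv G x ->
      fconv (pushf (@ev A B) (prodF F G)) (sval f x)).

Definition ps_sub (A : psSpace) (P : A -> Prop) : psSpace :=
  @PsSpace {a : A | P a} (fun U a => ps_conv (pushf sval U) (sval a)).

Definition Ropen (A : psSpace) (S : set A) : Prop :=
  forall (U : set_system A) (a : A), is_ultra U -> ps_conv U a -> S a -> U S.

Definition epitop (A : psSpace) : Prop :=
  exists (J : Type) (Y Z : J -> topologicalType)
         (f : forall j, A -> cmap (ps_of_top (Y j)) (ps_of_top (Z j))),
  forall (U : set_system A) (a : A), is_ultra U ->
    (ps_conv U a <->
     forall j, @ps_conv (ps_exp (ps_of_top (Y j)) (ps_of_top (Z j)))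
                 (pushf (f j) U) (f j a)).

Definition ps_path_rel (A : psSpace) (a b : A) : Prop :=
  exists p : I01 -> A, [/\ @ps_cont (ps_of_top I01) A p, p i0 = a & p i1 = b].

Definition ps_comp (A : psSpace) := {C : set A | exists a, C = ps_path_rel a}.

Definition ps_proj (A : psSpace) (a : A) : ps_comp A :=
  exist _ (ps_path_rel a) (ex_intro _ a erefl).

Definition pi0_ps (A : psSpace) : psSpace :=
  @PsSpace (ps_comp A) (fun U z =>
    U = principal z \/
    exists (V : set_system A) (a : A),
      [/\ is_ultra V, ps_conv V a, U = pushf (@ps_proj A) V & ps_proj a = z]).

Definition pi0_epi (A : psSpace) : psSpace :=
  @PsSpace (ps_comp A) (fun U z =>
    forall c : set_system (ps_comp A) -> ps_comp A -> Prop,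
      epitop (@PsSpace (ps_comp A) c) ->
      @ps_cont A (@PsSpace (ps_comp A) c) (@ps_proj A) ->
      c U z).

Definition is_loop (X : topologicalType) (x0 : X) (f : I01 -> X) : Prop :=
  f i0 = x0 /\ f i1 = x0.

Definition loop_ps (X : topologicalType) (x0 : X) : psSpace :=
  @ps_sub (ps_exp (ps_of_top I01) (ps_of_top X))
          (fun f => is_loop x0 (sval f)).

(* Since [0,1] and X
   are topological, X^[0,1] is epitopological, and EpiTop is a full
   subcategory of PsTop closed under products and subspaces, so the EpiTop
   exponential and subspace coincide with the pseudotopological ones. *)
Definition loop_epi (X : topologicalType) (x0 : X) : psSpace := loop_ps x0.

Definition pi1_ps (X : topologicalType) (x0 : X) : psSpace := pi0_ps (loop_ps x0).
Definition pi1_epi (X : topologicalType) (x0 : X) : psSpace := pi0_epi (loop_epi x0).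

Definition loop_set (X : topologicalType) (x0 : X)
  : set {compact-open, I01 -> X} :=
  [set f | continuous (f : I01 -> X) /\ is_loop x0 f].

Definition top_path_rel (T : topologicalType) (a b : T) : Prop :=
  exists p : I01 -> T, [/\ continuous p, p i0 = a & p i1 = b].

Definition top_comp (T : topologicalType) :=
  {C : set T | exists a, C = top_path_rel a}.

Definition top_proj (T : topologicalType) (a : T) : top_comp T :=
  exist _ (top_path_rel a) (ex_intro _ a erefl).

Definition quot_open (T : topologicalType) (S : set (top_comp T)) : Prop :=
  open (@top_proj T @^-1` S).

Definition pi1_qtop (X : topologicalType) (x0 : X) :=
  top_comp (loop_set x0 : Type).
Definition qtop_open (X : topologicalType) (x0 : X) (S : set (pi1_qtop x0)) :=
  @quot_open (loop_set x0 : Type) S.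

(* the underlying loops of a class, to compare the three carriers *)
Definition cls_ps (X : topologicalType) (x0 : X) (c : ps_comp (loop_ps x0))
  : set (I01 -> X) :=
  (fun l : loop_ps x0 => sval (sval l)) @` sval c.

Definition cls_top (X : topologicalType) (x0 : X) (c : pi1_qtop x0)
  : set (I01 -> X) :=
  (fun l : (loop_set x0 : Type) => (sval l : I01 -> X)) @` sval c.

(** Since [0,1] is locally compact and regular, ultrafilter convergence in the
    pseudotopological exponential [X ^ [0,1]] is compact-open convergence, so
    Ω^ps(X,x0) is just the topological space Ω^top(X,x0) seen as a
    pseudotopological space.  Both therefore have the same paths, hence the
    same path components, and since a set of components is R-open in the final
    structure iff its preimage is R-open, R π1^ps = π1^qtop.  For π1^epi:
    every topological space is epitopological, so R π0^ps is one of the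
    structures in the infimum defining π0^epi, which makes R π0^epi at least
    as fine as R π0^ps; conversely π0^ps-convergence implies
    π0^epi-convergence once principal ultrafilters converge. *)

From HB Require Import structures.
From mathcomp Require Import all_boot all_order all_algebra.
From mathcomp Require Import all_classical all_reals all_analysis.
From mathcomp Require Import Rstruct Rstruct_topology.

Local Open Scope classical_set_scope.

Section Filters.
Context {T : Type}.
Implicit Types (F U : set_system T) (A : set T).

Lemma is_filterP {F} : is_filter F <-> Filter F.
Proof.
split; first by case=> FT FI FS; split.
by move=> FF; split; [exact: filterT | exact: filterI | exact: filterS].
Qed.

Lemma is_ultra_filter {U} : is_ultra U -> is_filter U.
Proof. by case. Qed.

Lemma is_ultra_UltraFilter {U} : UltraFilter U -> is_ultra U.
Proof.
move=> UU; split; first exact/is_filterP.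
  exact: filter_not_empty.
by move=> A; exact: in_ultra_setVsetC.
Qed.

Lemma principal_ultra (x : T) : is_ultra (principal x).
Proof.
split; [split | | move=> A; have [|] := pselect (A x); [left | right]] => //.
by move=> A B AB /AB.
Qed.

Lemma ultra_refinementsP {F A} : is_filter F ->
  (forall U, is_ultra U -> F `<=` U -> U A) -> F A.
Proof.
move=> /is_filterP FF finerA; apply: contrapT => nFA.
pose G := filter_from F (fun C => C `&` ~` A).
have GF : ProperFilter G.
  apply: filter_from_proper.
    apply: filter_from_filter; first by exists setT; exact: filterT.
    move=> C D FC FD; exists (C `&` D); first exact: filterI.
    by move=> x [[Cx Dx] nAx]; split; split.
  move=> C FC; apply: contrapT => /asboolP; rewrite asbool_neg.
  move=> /forallp_asboolPn CA; apply: nFA; apply: filterS FC => x Cx.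
  by apply: contrapT => nAx; apply: (CA x).
have [U [UU GU]] := ultraFilterLemma GF.
have FU : F `<=` U by move=> C FC; apply: GU; exists C => // x [].
have UnA : U (~` A) by apply: GU; exists setT; [exact: filterT | move=> x []].
have UA := finerA U (is_ultra_UltraFilter UU) FU.
by apply: (@filter_not_empty _ U); rewrite -(setICr A); exact: filterI.
Qed.

Lemma pushf_filter {S} (f : T -> S) {F} : is_filter F -> is_filter (pushf f F).
Proof.
case=> FT FI FS; split => //; first by move=> A B; exact: FI.
by move=> A B AB; apply: FS => x /AB.
Qed.

Lemma pushf_ultra {S} (f : T -> S) {U} : is_ultra U -> is_ultra (pushf f U).
Proof.
by case=> Uf U0 UC; split; [exact: pushf_filter | exact: U0 | move=> A; exact: UC].
Qed.

End Filters.

Lemma prodF_filter {S T} {F : set_system S} {G : set_system T} :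
  is_filter F -> is_filter G -> is_filter (prodF F G).
Proof.
case=> FT FI FS [GT GI GS]; split.
- by exists setT, setT; split.
- move=> P Q [A [B [FA GB ABP]]] [C [D [FC GD CDQ]]].
  exists (A `&` C), (B `&` D); split; [exact: FI | exact: GI |].
  by move=> [x y] [/= [Ax Cx] [By Dy]]; split; [apply: ABP | apply: CDQ].
- by move=> P Q PQ [A [B [FA GB ABP]]]; exists A, B; split => // z /ABP /PQ.
Qed.

Lemma ps_cont_comp {A B C : psSpace} {f : A -> B} {g : B -> C} :
  ps_cont f -> ps_cont g -> ps_cont (g \o f).
Proof.
by move=> cf cg U a Uu Ua; exact: cg _ _ (pushf_ultra f Uu) (cf U a Uu Ua).
Qed.

Lemma Ropen_preimage {A B : psSpace} {f : A -> B} {S : set B} :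
  ps_cont f -> Ropen S -> Ropen (f @^-1` S).
Proof.
by move=> cf oS U a Uu Ua; exact: oS _ _ (pushf_ultra f Uu) (cf U a Uu Ua).
Qed.

Lemma fconv_ps_of_top {T : topologicalType} {F : set_system T} {x : T} :
  is_filter F -> fconv (A := ps_of_top T) F x <-> nbhs x `<=` F.
Proof.
move=> Ff; split; last by move=> xF U _ FU; exact: subset_trans FU.
by move=> Fx A xA; apply: ultra_refinementsP => // U Uu FU; exact: Fx.
Qed.

Lemma Ropen_ps_of_topP {T : topologicalType} (S : set T) :
  Ropen (A := ps_of_top T) S <-> open S.
Proof.
split; last by move=> oS U x _ xU Sx; apply: xU; exact: open_nbhs_nbhs.
move=> oS; rewrite openE => x Sx.
apply: (@ultra_refinementsP _ (nbhs x)).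
  by apply/is_filterP; exact: nbhs_filter.
by move=> U Uu xU; exact: (oS U x Uu xU Sx).
Qed.

Lemma ps_cont_ps_of_topP {S T : topologicalType} (f : S -> T) :
  ps_cont (A := ps_of_top S) (B := ps_of_top T) f <-> continuous f.
Proof.
split; last by move=> cf U x _ xU B /cf; exact: xU.
move=> cf x B xB.
apply: (@ultra_refinementsP _ (nbhs x)).
  by apply/is_filterP; exact: nbhs_filter.
by move=> U Uu xU; exact: (cf U x Uu xU B xB).
Qed.

Definition cst_cmap {T : topologicalType} (t : T) :
    cmap (ps_of_top bool) (ps_of_top T) :=
  exist _ (fun=> t) ((ps_cont_ps_of_topP _).2 (@cst_continuous bool T t)).

(* [T] is initial for the embedding [t |-> cst t] into [T ^ bool]. *)
Lemma epitop_ps_of_top (T : topologicalType) : epitop (ps_of_top T).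
Proof.
exists unit, (fun=> bool), (fun=> T), (fun=> cst_cmap) => U a Uu.
have Uf := is_ultra_filter Uu.
have evF G : is_filter G -> is_filter
    (pushf (@ev (ps_of_top bool) (ps_of_top T)) (prodF (pushf cst_cmap U) G)).
  by move=> Gf; apply: pushf_filter; apply: prodF_filter => //; exact: pushf_filter.
split.
  move=> aU [] G y Gf _; apply/(fconv_ps_of_top (evF G Gf)) => B aB.
  exists [set g | forall b, B (sval g b)], setT; split.
  - by case: Uf => _ _ US; apply: US (aU B aB) => t Bt b.
  - by case: Gf.
  - by case=> g b [/= gB _]; exact: gB.
have trueF := is_ultra_filter (principal_ultra true).
have trueC : fconv (A := ps_of_top bool) (principal true) true.
  by apply/(fconv_ps_of_top trueF) => P /nbhs_singleton.
move=> /(_ tt _ _ trueF trueC) /(fconv_ps_of_top (evF _ trueF)) aF B aB.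
have [A' [B' [UA' B'true AB]]] := aF B aB.
by case: Uf => _ _ US; apply: US UA' => t A't; exact: (AB (cst_cmap t, true)).
Qed.

Definition Rtop (A : psSpace) : Type := ps_car A.
HB.instance Definition _ (A : psSpace) := gen_eqMixin (Rtop A).
HB.instance Definition _ (A : psSpace) := gen_choiceMixin (Rtop A).

Section Reflection.
Variable A : psSpace.

Let RopenT : Ropen (A := A) setT.
Proof. by move=> U a /is_ultra_filter [UT _ _]. Qed.

Let RopenI : setI_closed (Ropen (A := A)).
Proof.
move=> P Q oP oQ U a Uu Ua [Pa Qa]; case: (Uu) => [[_ UI _] _ _].
exact: UI (oP U a Uu Ua Pa) (oQ U a Uu Ua Qa).
Qed.

Let Ropen_bigcup (I : Type) (f : I -> set A) :
  (forall i, Ropen (f i)) -> Ropen (\bigcup_i f i).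
Proof.
move=> ofi U a Uu Ua [i _ fia]; case: (Uu) => [[_ _ US] _ _].
by apply: US (ofi i U a Uu Ua fia) => b fib; exists i.
Qed.

HB.instance Definition _ :=
  isOpenTopological.Build (Rtop A) RopenT RopenI Ropen_bigcup.

Lemma nbhs_RtopP (a : Rtop A) (U : set_system (Rtop A)) : is_filter U ->
  nbhs a `<=` U <-> (forall S, Ropen (A := A) S -> S a -> U S).
Proof.
case=> _ _ US; split.
  by move=> aU S oS Sa; apply: aU; exact: open_nbhs_nbhs.
by move=> oU B; rewrite nbhsE => -[S [oS Sa] SB]; exact: US SB (oU S oS Sa).
Qed.

Lemma ps_cont_Rtop : ps_cont (A := A) (B := ps_of_top (Rtop A)) id.
Proof.
move=> U a Uu Ua; apply/nbhs_RtopP; first exact: is_ultra_filter.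
by move=> S oS Sa; exact: (oS U a Uu Ua Sa).
Qed.

End Reflection.

Lemma top_projP (T : topologicalType) (z : top_comp T) : exists a, z = top_proj a.
Proof. by case: z => C [a eC]; exists a; exact: eq_exist. Qed.

Section PathComponents.
Variable A : psSpace.

Lemma ps_projP (z : ps_comp A) : exists a, z = ps_proj a.
Proof. by case: z => C [a eC]; exists a; exact: eq_exist. Qed.

Lemma ps_cont_ps_proj : ps_cont (A := A) (B := pi0_ps A) (@ps_proj A).
Proof. by move=> V a Vu Va; right; exists V, a. Qed.

Lemma Ropen_pi0_psP (S : set (ps_comp A)) :
  Ropen (A := pi0_ps A) S <-> Ropen (A := A) (@ps_proj A @^-1` S).
Proof.
split; first exact: Ropen_preimage ps_cont_ps_proj.
move=> oS U z _ [-> // | [V [a [Vu Va -> <-]]]] Sa.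
exact: (oS V a Vu Va Sa).
Qed.

Lemma pi0_epi_conv_nbhs (U : set_system (ps_comp A)) (z : ps_comp A) :
  @ps_conv (pi0_epi A) U z -> nbhs (z : Rtop (pi0_ps A)) `<=` U.
Proof.
move/(_ (fun U z => nbhs (z : Rtop (pi0_ps A)) `<=` U)); apply.
  exact: (epitop_ps_of_top (Rtop (pi0_ps A))).
exact (ps_cont_comp ps_cont_ps_proj (@ps_cont_Rtop (pi0_ps A))).
Qed.

(* [psSpace] does not require principal ultrafilters to converge. *)
Hypothesis principal_conv : forall a : A, ps_conv (principal a) a.

Lemma pi0_ps_conv_epi (U : set_system (ps_comp A)) (z : ps_comp A) :
  @ps_conv (pi0_ps A) U z -> @ps_conv (pi0_epi A) U z.
Proof.
move=> zU c _ cproj; case: zU => [-> | [V [a [Vu Va -> <-]]]]; last exact: cproj.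
have [a ->] := ps_projP z.
exact: (cproj _ a (principal_ultra a) (principal_conv a)).
Qed.

Lemma Ropen_pi0_epiP (S : set (ps_comp A)) :
  Ropen (A := pi0_epi A) S <-> Ropen (A := pi0_ps A) S.
Proof.
split => oS.
  apply: (@Ropen_preimage (pi0_ps A) (pi0_epi A) id) oS.
  by move=> U z _; exact: pi0_ps_conv_epi.
have : Ropen (A := ps_of_top (Rtop (pi0_ps A))) S by exact/Ropen_ps_of_topP.
apply: (@Ropen_preimage (pi0_epi A) (ps_of_top (Rtop (pi0_ps A))) id).
by move=> U z _; exact: pi0_epi_conv_nbhs.
Qed.

End PathComponents.

Lemma compact_nbhs_subset {Y : topologicalType} :
  locally_compact [set: Y] -> regular_space Y ->
  forall (y : Y) (W : set Y), nbhs y W ->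
  exists K, [/\ compact K, nbhs y K & K `<=` W].
Proof.
move=> lcY regY y W yW.
have [B] := lcY y I; rewrite withinET => yB [cB clB].
have [P yP cPW] := regY y W yW.
exists (B `&` closure P); split.
- exact: compact_closedI cB (@closed_closure _ P).
- by apply: filterI yB _; apply: filterS yP; exact: subset_closure.
- by move=> z [_ /cPW].
Qed.

Section CompactOpen.
Context {Y X : topologicalType}.
Hypotheses (lcY : locally_compact [set: Y]) (regY : regular_space Y).
Local Notation C := (ps_exp (ps_of_top Y) (ps_of_top X)).
Local Notation evYX := (@ev (ps_of_top Y) (ps_of_top X)).

Lemma ps_exp_convP (U : set_system C) (f : C) : is_ultra U ->
  ps_conv U f <->
  (sval @ U : set_system {compact-open, Y -> X}) -->
  (sval f : {compact-open, Y -> X}).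
Proof.
move=> /is_ultra_filter Uf; have UF := is_filterP.1 Uf.
have evF G : is_filter G -> is_filter (pushf evYX (prodF U G)).
  by move=> Gf; apply: pushf_filter; exact: prodF_filter.
rewrite compact_open_cvgP; split.
  move=> fU K O cK oO fKO.
  have near_fKO y : K y -> prodF U (nbhs y) (evYX @^-1` O).
    move=> Ky; have yF : is_filter (nbhs y) by apply/is_filterP; exact: nbhs_filter.
    have yC : fconv (A := ps_of_top Y) (nbhs y) y by exact/(fconv_ps_of_top yF).
    have /(fconv_ps_of_top (evF _ yF)) := fU (nbhs y) y yF yC.
    by apply; apply: open_nbhs_nbhs; split => //; apply: fKO; exists y.
  move/compact_near_coveringP: cK => /(_ _ U (fun g y => O (sval g y)) UF).
  move=> covK; apply: filterS (covK _) => [g gKO _ [y Ky <-] | y Ky].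
    exact: gKO.
  have [A [B [UA yB ABO]]] := near_fKO y Ky.
  by exists (B, A) => // -[z g] [/= Bz Ag]; exact: (ABO (g, z)).
move=> coU G y Gf yG; apply/(fconv_ps_of_top (evF G Gf)) => N.
rewrite nbhsE; case=> O [oO Ofy] ON.
have cf : continuous (sval f) by apply/ps_cont_ps_of_topP; exact: (svalP f).
have fyO : nbhs (sval f y) O by exact: open_nbhs_nbhs.
have [K [cK yK fKO]] := compact_nbhs_subset lcY regY _ _ (cf y _ fyO).
exists [set g : C | sval g @` K `<=` O], K; split.
- by apply: coU => // _ [z Kz <-]; exact: fKO.
- by move/(fconv_ps_of_top Gf): yG; apply.
- by case=> g z [/= gKO Kz]; apply: ON; apply: gKO; exists z.
Qed.

End CompactOpen.

Definition ps_homeo {A : psSpace} {T : topologicalType}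
    (phi : A -> T) (psi : T -> A) :=
  [/\ cancel phi psi, cancel psi phi &
      forall U a, is_ultra U -> ps_conv U a <-> nbhs (phi a) `<=` pushf phi U].

Section Homeomorphism.
Context {A : psSpace} {T : topologicalType} {phi : A -> T} {psi : T -> A}.
Hypothesis homeo : ps_homeo phi psi.

Let phiK : cancel phi psi. Proof. by case: homeo. Qed.
Let psiK : cancel psi phi. Proof. by case: homeo. Qed.
Let phi_convP :
  forall U a, is_ultra U -> ps_conv U a <-> nbhs (phi a) `<=` pushf phi U.
Proof. by case: homeo. Qed.

Let preimage_psiK (Q : set T) : psi @^-1` (phi @^-1` Q) = Q.
Proof. by apply/seteqP; split=> t; rewrite /= psiK. Qed.

Lemma ps_cont_homeo : ps_cont (B := ps_of_top T) phi.
Proof. by move=> U a Uu /(phi_convP U a Uu). Qed.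

Lemma ps_cont_homeo_inv : ps_cont (A := ps_of_top T) psi.
Proof.
move=> U t Uu tU; apply/(phi_convP _ _ (pushf_ultra psi Uu)).
by rewrite psiK => B /tU; rewrite -{1}(preimage_psiK B).
Qed.

Lemma principal_conv_homeo (a : A) : ps_conv (principal a) a.
Proof. by apply/(phi_convP _ _ (principal_ultra a)) => B; exact: nbhs_singleton. Qed.

Lemma ps_path_rel_homeoP (a b : A) :
  ps_path_rel a b <-> top_path_rel (phi a) (phi b).
Proof.
split=> -[p [pc p0 p1]].
  exists (phi \o p); split; [| by rewrite /= p0 | by rewrite /= p1].
  by apply/ps_cont_ps_of_topP; exact: (ps_cont_comp pc ps_cont_homeo).
exists (psi \o p); split; [| by rewrite /= p0 phiK | by rewrite /= p1 phiK].
exact: ps_cont_comp ((ps_cont_ps_of_topP _).2 pc) ps_cont_homeo_inv.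
Qed.

Lemma image_ps_path_rel_homeo (W : Type) (g : T -> W) (a : A) :
  (g \o phi) @` ps_path_rel a = g @` top_path_rel (phi a).
Proof.
apply/seteqP; split=> _ [b ab <-].
  by exists (phi b) => //; exact/ps_path_rel_homeoP.
by exists (psi b); [apply/ps_path_rel_homeoP; rewrite psiK | rewrite /= psiK].
Qed.

Lemma Ropen_homeoP (Q : set T) : Ropen (phi @^-1` Q) <-> open Q.
Proof.
rewrite -Ropen_ps_of_topP; split; last exact: Ropen_preimage ps_cont_homeo.
by move=> /(Ropen_preimage ps_cont_homeo_inv); rewrite preimage_psiK.
Qed.

End Homeomorphism.

Section SetType.
Context {T : topologicalType} (A : set T).

Lemma nbhs_set_typeP (a : A) (Q : set A) :
  nbhs a Q <-> exists2 B, nbhs (set_val a) B & set_val @^-1` B `<=` Q.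
Proof.
split.
  rewrite nbhsE /= => -[W [[B oB eB] Wa] WQ].
  exists B; last by rewrite eB.
  by exists B => //; split => //; rewrite -eB in Wa.
case=> B + BQ; rewrite !nbhsE; case=> O [oO Oa] OB.
exists (set_val @^-1` O); last by move=> z /OB /BQ.
by split => //; exists O.
Qed.

Lemma set_type_cvgP (F : set_system A) (a : A) :
  Filter F -> F --> a <-> set_val @ F --> set_val a.
Proof.
move=> FF; split=> Fa B.
  by move=> aB; apply: Fa; apply/nbhs_set_typeP; exists B.
by move/nbhs_set_typeP => -[C aC CB]; exact: filterS CB (Fa C aC).
Qed.

Lemma compact_set_type (K : set A) : compact (set_val @` K) -> compact K.
Proof.
move=> cK F PF FK.
have [_ [[k Kk <-] clk]] : set_val @` K `&` cluster (set_val @ F) !=set0.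
  have KK : K `<=` set_val @^-1` (set_val @` K) by move=> z Kz; exists z.
  exact: cK (filterS KK FK).
exists k; split => // P Q FP /nbhs_set_typeP [B kB BQ].
have PP : P `<=` set_val @^-1` (set_val @` P) by move=> z Pz; exists z.
have [_ [[p Pp <-] Bp]] := clk (set_val @` P) B (filterS PP FP) kB.
by exists p; split => //; exact: BQ.
Qed.

End SetType.

Lemma I01_locally_compact : locally_compact [set: I01].
Proof.
move=> t _; exists setT; first by rewrite withinET; exact: filterT.
split; last exact: closedT.
apply: compact_set_type.
have -> : set_val @` [set: I01] = `[0%R, 1%R]%classic.
  apply/seteqP; split => [_ [[x /set_mem x01] _ <-] // | x x01].
  by exists (exist _ x (mem_set x01)).
exact: segment_compact.
Qed.

Section LoopSpace.
Context {X : topologicalType} (x0 : X).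
Local Notation LP := (loop_ps x0).
Local Notation LT := (loop_set x0 : Type).

Definition loop_of_ps (m : LP) : LT.
Proof.
exists (sval (sval m) : {compact-open, I01 -> X}); apply: mem_set; split.
  by apply/ps_cont_ps_of_topP; exact: (svalP (sval m)).
exact: (svalP m).
Defined.

Lemma ps_cont_loop (n : LT) :
  ps_cont (A := ps_of_top I01) (B := ps_of_top X) (set_val n : I01 -> X).
Proof. by apply/ps_cont_ps_of_topP; case: (set_valP n). Qed.

Definition ps_of_loop (n : LT) : LP :=
  exist (fun f : cmap (ps_of_top I01) (ps_of_top X) => is_loop x0 (sval f))
    (exist _ (set_val n : I01 -> X) (ps_cont_loop n)) (set_valP n).2.

Lemma loop_of_psK : cancel loop_of_ps ps_of_loop.
Proof. by case=> [[f cf] lf]; do 2 apply: eq_exist. Qed.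

Lemma ps_of_loopK : cancel ps_of_loop loop_of_ps.
Proof. by case=> f lf; apply: eq_exist. Qed.

Lemma loop_ps_convP (U : set_system LP) (m : LP) : is_ultra U ->
  ps_conv U m <-> nbhs (loop_of_ps m) `<=` pushf loop_of_ps U.
Proof.
move=> Uu; have UF := is_filterP.1 (pushf_filter loop_of_ps (is_ultra_filter Uu)).
have Uu' := pushf_ultra sval Uu.
rewrite [ps_conv _ _](ps_exp_convP I01_locally_compact uniform_regular _ _ Uu').
exact (iff_sym (set_type_cvgP _ _ (loop_of_ps m) UF)).
Qed.

Lemma loop_ps_homeo : ps_homeo loop_of_ps ps_of_loop.
Proof.
by split; [exact: loop_of_psK | exact: ps_of_loopK | exact: loop_ps_convP].
Qed.

Lemma cls_ps_proj (m : LP) :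
  cls_ps (ps_proj m) = cls_top (top_proj (loop_of_ps m)).
Proof. exact (image_ps_path_rel_homeo loop_ps_homeo _ set_val m). Qed.

Lemma pi1_ps_classesP (L : set (I01 -> X)) :
  (exists c : pi1_ps x0, cls_ps c = L) <-> (exists c : pi1_qtop x0, cls_top c = L).
Proof.
split=> -[c <-].
  have [m ->] := ps_projP _ c.
  by exists (top_proj (loop_of_ps m)); rewrite cls_ps_proj.
have [n ->] := top_projP _ c.
by exists (ps_proj (ps_of_loop n)); rewrite cls_ps_proj ps_of_loopK.
Qed.

Lemma Ropen_pi1_psP (S : set (set (I01 -> X))) :
  Ropen (A := pi1_ps x0) [set c | S (cls_ps c)] <->
  qtop_open (x0 := x0) [set c | S (cls_top c)].
Proof.
rewrite Ropen_pi0_psP /qtop_open /quot_open.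
have -> : @ps_proj LP @^-1` [set c | S (cls_ps c)] =
    loop_of_ps @^-1` (@top_proj LT @^-1` [set c | S (cls_top c)]).
  by apply/seteqP; split=> m /=; rewrite cls_ps_proj.
exact: (Ropen_homeoP loop_ps_homeo).
Qed.

Lemma Ropen_pi1_epiP (S : set (set (I01 -> X))) :
  Ropen (A := pi1_epi x0) [set c | S (cls_ps c)] <->
  Ropen (A := pi1_ps x0) [set c | S (cls_ps c)].
Proof. exact: Ropen_pi0_epiP (principal_conv_homeo loop_ps_homeo) _. Qed.

End LoopSpace.

Theorem proposition6p5 (X : topologicalType) (x0 : X) :
  (* the three underlying sets of loop classes coincide *)
  (forall L : set (I01 -> X),
     (exists c : pi1_ps x0, cls_ps c = L) <-> (exists c : pi1_qtop x0, cls_top c = L))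
  /\ (forall L : set (I01 -> X),
     (exists c : pi1_epi x0, cls_ps c = L) <-> (exists c : pi1_qtop x0, cls_top c = L))
  (* R_2 pi_1^epi = pi_1^qtop as topologies *)
  /\ (forall S : set (set (I01 -> X)),
        Ropen (A := pi1_epi x0) [set c | S (cls_ps c)] <->
        qtop_open (x0 := x0) [set c | S (cls_top c)])
  (* R pi_1^ps = pi_1^qtop as topologies *)
  /\ (forall S : set (set (I01 -> X)),
        Ropen (A := pi1_ps x0) [set c | S (cls_ps c)] <->
        qtop_open (x0 := x0) [set c | S (cls_top c)]).
Proof.
split; first exact: pi1_ps_classesP.
split; first exact: pi1_ps_classesP.
split=> S; last exact: Ropen_pi1_psP.
by rewrite Ropen_pi1_epiP; exact: Ropen_pi1_psP.
Qed.
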